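(* Let $t,s$ be two trees of $\mathcal{A}$ different from $|$, let $k$ be the number of internal vertices on the right-most branch of $t$ and $l$ the number of internal vertices on the left-most branch of $s$. Then $$t*s=\sum_{\sigma\in\mathrm{QSh}(k,l)}\sigma(t,s).$$
   Context: Trees: planar rooted trees in which every internal vertex has at least two children; the root vertex hangs from a trunk edge; leaves are edges without upper vertex; $|$ is the one-leaf tree. $\mathcal A$ is the $\mathbb K$-vector space with basis these trees, with products defined recursively: $x_0\vee\cdots\vee x_k$ ($k\ge1$) grafts trees left to right on a new root vertex; for $x=x^{(0)}\vee\cdots\vee x^{(k)}$, $y=y^{(0)}\vee\cdots\vee y^{(l)}$: $x\prec y=x^{(0)}\vee\cdots\vee x^{(k-1)}\vee(x^{(k)}*y)$, $x\cdot y=x^{(0)}\vee\cdots\vee x^{(k-1)}\vee(x^{(k)}*y^{(0)})\vee y^{(1)}\vee\cdots\vee y^{(l)}$, $x\succ y=(x*y^{(0)})\vee y^{(1)}\vee\cdots\vee y^{(l)}$, with $*=\prec+\cdot+\succ$ and $|*z=z*|=z$. A $(k,l)$-quasi-shuffle is a surjection $\sigma:\{1,\dots,k+l\}\to\{1,\dots,n\}$ (for some $n$) with $\sigma(1)<\cdots<\sigma(k)$ and $\sigma(k+1)<\cdots<\sigma(k+l)$; $\mathrm{QSh}(k,l)$ is their set. Comb representations: the right-most branch of $t$ is the path from the root always going to the right-most child; let $v_1,\dots,v_k$ be its internal vertices (from the root up) and $F_i$ the (nonempty) forest of subtrees rooted at the children of $v_i$ other than its right-most child. Likewise let $w_1,\dots,w_l$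 be the internal vertices on the left-most branch of $s$ and $F_{k+j}$ the forest of subtrees rooted at the children of $w_j$ other than its left-most child. For $\sigma\in\mathrm{QSh}(k,l)$ with image $\{1,\dots,n\}$, $\sigma(t,s)$ is the tree built from a ladder of internal vertices $u_1$ (root), $u_2,\dots,u_n$, $u_{p+1}$ a child of $u_p$ and the ladder child of $u_n$ a leaf, where the children of $u_p$ are, from left to right: the trees of $F_i$ if $\sigma(i)=p$ for some $i\le k$, then the ladder child, then the trees of $F_{k+j}$ if $\sigma(k+j)=p$ for some $j\le l$. *)

From HB Require Import structures.
From mathcomp Require Import all_boot all_order all_algebra.
Set Implicit Arguments. Unset Strict Implicit. Unset Printing Implicit Defensive.
Import GRing.Theory.
Local Open Scope ring_scope.

(* Planar rooted trees.  [Node ts] is a vertex with children [ts]     *)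
(* (left to right); [Node [::]] is the one-leaf tree |, i.e. a leaf.  *)
Inductive tree := Node of seq tree.

Definition leaf : tree := Node [::].

Fixpoint encode (t : tree) : GenTree.tree unit :=
  let: Node ts := t in GenTree.Node 0 (map encode ts).

Fixpoint decode (g : GenTree.tree unit) : tree :=
  match g with
  | GenTree.Leaf _ => Node [::]
  | GenTree.Node _ gs => Node (map decode gs)
  end.

Fixpoint encodeK (t : tree) : decode (encode t) = t :=
  match t with
  | Node ts => f_equal Node
      ((fix aux (l : seq tree) : map decode (map encode l) = l :=
          match l with
          | [::] => erefl
          | a :: l' => f_equal2 cons (encodeK a) (aux l')
          end) ts)
  end.

HB.instance Definition _ := Equality.copy tree (can_type encodeK).

Fixpoint wf (t : tree) : bool :=
  let: Node ts := t in (size ts != 1%N) && all wf ts.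

Definition drop_last (T : Type) (s : seq T) := take (size s).-1 s.

Section Algebra.
Variable K : fieldType.

(* Elements of the K-vector space A with basis the trees, as formal    *)
(* linear combinations; two of them are equal in A iff all their       *)
(* coefficients agree ([veq]).                                         *)
Definition vsum := seq (K * tree).

Definition coef (v : vsum) (u : tree) : K :=
  \sum_(p <- v) (if p.2 == u then p.1 else 0).

Definition veq (v w : vsum) : Prop := forall u, coef v u = coef w u.

(* linear extension of a map on trees (grafting in a slot) *)
Definition graft (f : tree -> tree) (v : vsum) : vsum :=
  map (fun p => (p.1, f p.2)) v.

(* The product * = prec + dot + succ of the paper, extended bilinearly:
   for x = x0 v ... v xk and y = y0 v ... v yl (both different from |):
     x prec y = x0 v ... v x(k-1) v (xk * y)
     x dot  y = x0 v ... v x(k-1) v (xk * y0) v y1 v ... v yl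
     x succ y = (x * y0) v y1 v ... v yl
   and | * z = z * | = z.  [star_last y] below is [xk * y]. *)
Fixpoint star (x : tree) : tree -> vsum :=
  match x with
  | Node xs =>
    let star_last :=
      (fix f (l : seq tree) : tree -> vsum :=
         match l with
         | [::] => fun _ => [::]
         | [:: a] => star a
         | _ :: l' => f l'
         end) xs in
    fix go (y : tree) : vsum :=
      match y with
      | Node ys =>
        match xs, ys with
        | [::], _ => [:: (1, y)]
        | _, [::] => [:: (1, x)]
        | _, y0 :: ys' =>
            (* x prec y *)
            graft (fun z => Node (drop_last xs ++ [:: z])) (star_last y)
            (* x dot y *)
         ++ graft (fun z => Node (drop_last xs ++ z :: ys')) (star_last y0)
            (* x succ y *)
         ++ graft (fun z => Node (z :: ys')) (go y0)
        end
      end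
  end.

End Algebra.

Fixpoint rdepth (t : tree) : nat :=
  match t with
  | Node ts =>
    (fix f (l : seq tree) : nat :=
       match l with
       | [::] => 0%N
       | [:: a] => (rdepth a).+1
       | _ :: l' => f l'
       end) ts
  end.

Fixpoint ldepth (t : tree) : nat :=
  match t with
  | Node [::] => 0%N
  | Node (a :: _) => (ldepth a).+1
  end.

(* [F_1; ...; F_k]: forests hanging to the left of the right-most branch,
   from the root up *)
Fixpoint rforests (t : tree) : seq (seq tree) :=
  match t with
  | Node ts =>
    (fix f (l : seq tree) : seq (seq tree) :=
       match l with
       | [::] => [::]
       | [:: a] => drop_last ts :: rforests a
       | _ :: l' => f l'
       end) ts
  end.

(* [F_(k+1); ...; F_(k+l)]: forests hanging to the right of the left-most
   branch, from the root up *)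
Fixpoint lforests (t : tree) : seq (seq tree) :=
  match t with
  | Node [::] => [::]
  | Node (a :: rest) => rest :: lforests a
  end.

(* Quasi-shuffles.  Indices and values are 0-based: a (k,l)-quasi-     *)
(* shuffle is a map sig : 'I_(k+l) -> 'I_(k+l) increasing on {0..k-1}, *)
(* increasing on {k..k+l-1}, whose image is {0,...,n-1}, where         *)
(* n = #|image| (any surjection from k+l points onto {0..n-1} has      *)
(* n <= k+l, so this is exactly QSh(k,l) of the paper, shifted by 1).  *)
Section QSh.
Variables k l : nat.

Definition qsh_img (sg : {ffun 'I_(k + l) -> 'I_(k + l)}) : {set 'I_(k + l)} :=
  [set sg i | i : 'I_(k + l)].

Definition qsh_n (sg : {ffun 'I_(k + l) -> 'I_(k + l)}) : nat := #|qsh_img sg|.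

Definition is_qsh (sg : {ffun 'I_(k + l) -> 'I_(k + l)}) : bool :=
  [&& [forall i : 'I_(k + l), forall j : 'I_(k + l),
         ((i < j) && (j < k))%N ==> (val (sg i) < val (sg j))%N],
      [forall i : 'I_(k + l), forall j : 'I_(k + l),
         ((k <= i) && (i < j))%N ==> (val (sg i) < val (sg j))%N]
    & qsh_img sg == [set p : 'I_(k + l) | (p < qsh_n sg)%N]].

(* sigma(t,s), given the forests F_1..F_k (Ft) and F_(k+1)..F_(k+l) (Fs):
   a ladder u_0 (root), ..., u_(n-1); children of u_p: the trees of F_i
   if sigma(i) = p (i < k), then the ladder child, then the trees of
   F_(k+j) if sigma(k+j) = p. *)
Definition qsh_left (Ft : seq (seq tree)) (sg : {ffun 'I_(k + l) -> 'I_(k + l)})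
  (p : nat) : seq tree :=
  flatten [seq nth [::] Ft i | i : 'I_(k + l) <- enum 'I_(k + l) & (i < k)%N && (val (sg i) == p)].

Definition qsh_right (Fs : seq (seq tree)) (sg : {ffun 'I_(k + l) -> 'I_(k + l)})
  (p : nat) : seq tree :=
  flatten [seq nth [::] Fs (i - k) | i : 'I_(k + l) <- enum 'I_(k + l) & (k <= i)%N && (val (sg i) == p)].

Fixpoint ladder (Ft Fs : seq (seq tree)) (sg : {ffun 'I_(k + l) -> 'I_(k + l)})
  (m p : nat) : tree :=
  match m with
  | 0%N => leaf
  | m'.+1 => Node (qsh_left Ft sg p ++ ladder Ft Fs sg m' p.+1 :: qsh_right Fs sg p)
  end.

Definition qsh_tree (Ft Fs : seq (seq tree)) (sg : {ffun 'I_(k + l) -> 'I_(k + l)}) : tree :=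
  ladder Ft Fs sg (qsh_n sg) 0.

Definition qsh_sum (K : fieldType) (Ft Fs : seq (seq tree)) : vsum K :=
  [seq ((1 : K), qsh_tree Ft Fs sg) | sg <- enum [pred sg | is_qsh sg]].

End QSh.

From HB Require Import structures.
From mathcomp Require Import all_boot all_order all_algebra.
From mathcomp Require Import zify.
Set Implicit Arguments. Unset Strict Implicit. Unset Printing Implicit Defensive.

(* Both sides satisfy the same recursion.  Record a (k,l)-quasi-shuffle with
   image {1,...,n} as the word of length n whose p-th letter says whether p is
   a value of the first block only (L), of both blocks (B) or of the second
   block only (R).  This is a bijection onto the words W(k,l) with k letters
   among L, B and l letters among B, R, and these satisfy
     W(k+1,l+1) = L W(k,l+1) + B W(k,l) + R W(k+1,l),
   and sigma(t,s) is the ladder read off the word, the first letter fixing the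
   forests hanging at the root.  The three parts of W(k+1,l+1) thus produce
   exactly the three terms of t * s = t < s + t . s + t > s, with the rest of
   the ladder obtained from the last subtree of t, the first subtree of s, or
   both; the identity follows by induction on the sizes of t and s. *)

Lemma rdepth_cons x xs : rdepth (Node (x :: xs)) = (rdepth (last x xs)).+1.
Proof. by elim: xs x => [|y ys IH] x //; rewrite -IH. Qed.

Lemma rforests_cons x xs :
  rforests (Node (x :: xs)) = drop_last (x :: xs) :: rforests (last x xs).
Proof.
rewrite /=; move: (drop_last (x :: xs)) => F.
by elim: xs x => [|y ys IH] x //; apply: IH.
Qed.

Lemma drop_lastK (T : Type) (x : T) xs : drop_last (x :: xs) ++ [:: last x xs] = x :: xs.
Proof.
rewrite /drop_last [in RHS]lastI -cats1; congr (_ ++ _).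
by rewrite lastI size_rcons /= -cats1 take_size_cat ?size_belast.
Qed.

Lemma star_cons (K : fieldType) x xs y0 ys :
  let t := Node (x :: xs) in let s := Node (y0 :: ys) in
  star K t s =
     graft (fun z => Node (drop_last (x :: xs) ++ [:: z])) (star K (last x xs) s)
  ++ graft (fun z => Node (drop_last (x :: xs) ++ z :: ys)) (star K (last x xs) y0)
  ++ graft (fun z => Node (z :: ys)) (star K t y0).
Proof. by rewrite [star _ _ _]/=; congr (graft _ _ ++ graft _ _ ++ _); elim: xs x. Qed.

Fixpoint tree_size (t : tree) : nat :=
  let: Node ts := t in (sumn (map tree_size ts)).+1.

Lemma tree_size_child x xs : x \in xs -> tree_size x < tree_size (Node xs).
Proof.
rewrite /= ltnS; elim: xs => [|y ys IH] //=; rewrite inE => /predU1P[->|/IH].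
  exact: leq_addr.
by move/leq_trans; apply; apply: leq_addl.
Qed.

Section FormalSums.
Variable K : fieldType.
Implicit Types v w : vsum K.
Import GRing.Theory.
Local Open Scope ring_scope.

Lemma coef_cat v w u : coef (v ++ w) u = coef v u + coef w u.
Proof. by rewrite /coef big_cat. Qed.

Lemma veq_trans v1 v2 v3 : veq v1 v2 -> veq v2 v3 -> veq v1 v3.
Proof. by move=> h12 h23 u; rewrite h12 h23. Qed.

Lemma veq_cat v1 v2 w1 w2 : veq v1 w1 -> veq v2 w2 -> veq (v1 ++ v2) (w1 ++ w2).
Proof. by move=> h1 h2 u; rewrite !coef_cat h1 h2. Qed.

Lemma veq_perm v w : perm_eq v w -> veq v w.
Proof. by move=> h u; rewrite /coef (perm_big _ h). Qed.

Lemma coef_graft f v (S : seq tree) u : uniq S -> {subset map snd v <= S} ->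
  coef (graft f v) u = \sum_(z <- S | f z == u) coef v z.
Proof.
move=> uS vS; rewrite /coef /graft big_map big_mkcond /= exchange_big /=.
apply: eq_big_seq => p pv; rewrite big_mkcond (bigD1_seq p.2) ?vS ?map_f //=.
rewrite eqxx big1 ?addr0 // => z.
by rewrite eq_sym => /negbTE->; rewrite if_same.
Qed.

Lemma veq_graft f v w : veq v w -> veq (graft f v) (graft f w).
Proof.
move=> h u; pose S := undup (map snd (v ++ w)).
have [vS wS] : {subset map snd v <= S} /\ {subset map snd w <= S}.
  by split=> z zv; rewrite mem_undup map_cat mem_cat zv ?orbT.
rewrite (coef_graft f u (undup_uniq _) vS) (coef_graft f u (undup_uniq _) wS).
by apply: eq_bigr => z _; rewrite h.
Qed.

End FormalSums.

Definition letL : bool * bool := (true, false).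
Definition letB : bool * bool := (true, true).
Definition letR : bool * bool := (false, true).

Fixpoint qsh_words (k : nat) : nat -> seq (seq (bool * bool)) :=
  match k with
  | 0 => fun l => [:: nseq l letR]
  | k'.+1 => fix qsh_words_k (l : nat) :=
     match l with
     | 0 => [:: nseq k letL]
     | l'.+1 => map (cons letL) (qsh_words k' l) ++ map (cons letB) (qsh_words k' l')
                ++ map (cons letR) (qsh_words_k l')
     end
  end.

Lemma qsh_words0n l : qsh_words 0 l = [:: nseq l letR]. Proof. by []. Qed.
Lemma qsh_wordsn0 k : qsh_words k 0 = [:: nseq k letL]. Proof. by case: k. Qed.
Lemma qsh_wordsSS k l : qsh_words k.+1 l.+1 =
  map (cons letL) (qsh_words k l.+1) ++ map (cons letB) (qsh_words k l)
  ++ map (cons letR) (qsh_words k.+1 l).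
Proof. by []. Qed.

(* [cl] and [cr] are the numbers of forests of [Ft] and [Fs] already used. *)
Fixpoint word_tree (Ft Fs : seq (seq tree)) (cl cr : nat) (w : seq (bool * bool)) : tree :=
  match w with
  | [::] => leaf
  | c :: w' => Node ((if c.1 then nth [::] Ft cl else [::])
                     ++ word_tree Ft Fs (cl + c.1) (cr + c.2) w'
                     :: (if c.2 then nth [::] Fs cr else [::]))
  end.

Lemma word_tree_consl F Ft Fs cl cr w :
  word_tree (F :: Ft) Fs cl.+1 cr w = word_tree Ft Fs cl cr w.
Proof. by elim: w cl cr => [|c w IH] cl cr //=; rewrite addSn IH. Qed.

Lemma word_tree_consr F Ft Fs cl cr w :
  word_tree Ft (F :: Fs) cl cr.+1 w = word_tree Ft Fs cl cr w.
Proof. by elim: w cl cr => [|c w IH] cl cr //=; rewrite addSn IH. Qed.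

Lemma word_tree_lforests Ft s cl :
  word_tree Ft (lforests s) cl 0 (nseq (ldepth s) letR) = s.
Proof.
move ed: (ldepth s) => d; elim: d s cl ed => [|d IH] [[|a rest]] cl //= [ed].
by rewrite word_tree_consr IH.
Qed.

Lemma word_tree_rforests t Fs cr :
  word_tree (rforests t) Fs 0 cr (nseq (rdepth t) letL) = t.
Proof.
move ed: (rdepth t) => d; elim: d t cr ed => [|d IH] [[|x xs]] cr //;
  rewrite rdepth_cons // => -[ed].
by rewrite rforests_cons /= addn0 word_tree_consl IH // drop_lastK.
Qed.

Definition word_sum (K : fieldType) (ws : seq (seq (bool * bool))) Ft Fs : vsum K :=
  [seq (1%R, word_tree Ft Fs 0 0 w) | w <- ws].

Section WordSum.
Variables (K : fieldType) (Ft Fs : seq (seq tree)) (F G : seq tree).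
Implicit Type ws : seq (seq (bool * bool)).

Lemma word_sum_cat ws1 ws2 :
  word_sum K (ws1 ++ ws2) Ft Fs = word_sum K ws1 Ft Fs ++ word_sum K ws2 Ft Fs.
Proof. exact: map_cat. Qed.

Lemma word_sum_consL ws : word_sum K (map (cons letL) ws) (F :: Ft) Fs =
  graft (fun z => Node (F ++ [:: z])) (word_sum K ws Ft Fs).
Proof.
by rewrite /word_sum /graft -!map_comp; apply: eq_map => w /=; rewrite addn0 word_tree_consl.
Qed.

Lemma word_sum_consB ws : word_sum K (map (cons letB) ws) (F :: Ft) (G :: Fs) =
  graft (fun z => Node (F ++ z :: G)) (word_sum K ws Ft Fs).
Proof.
rewrite /word_sum /graft -!map_comp; apply: eq_map => w /=.
by rewrite word_tree_consl word_tree_consr.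
Qed.

Lemma word_sum_consR ws : word_sum K (map (cons letR) ws) Ft (G :: Fs) =
  graft (fun z => Node (z :: G)) (word_sum K ws Ft Fs).
Proof.
by rewrite /word_sum /graft -!map_comp; apply: eq_map => w /=; rewrite addn0 word_tree_consr.
Qed.

End WordSum.

Lemma star_qsh_words (K : fieldType) t s :
  veq (star K t s) (word_sum K (qsh_words (rdepth t) (ldepth s)) (rforests t) (lforests s)).
Proof.
have [n] := ubnP (tree_size t + tree_size s).
elim: n t s => // n IH [[|x xs]] s.
  by move=> _ u; rewrite /word_sum /= word_tree_lforests; case: s.
case: s => -[|y0 ys] lt_n.
  by move=> u; rewrite /word_sum qsh_wordsn0 /= -[X in (_, X)](word_tree_rforests _ [::] 0).
have lt_x : tree_size (last x xs) < tree_size (Node (x :: xs)).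
  by apply/tree_size_child/mem_last.
have lt_y : tree_size y0 < tree_size (Node (y0 :: ys)).
  by apply/tree_size_child/mem_head.
rewrite star_cons rdepth_cons rforests_cons qsh_wordsSS !word_sum_cat.
rewrite word_sum_consL word_sum_consB word_sum_consR.
apply: veq_cat; last apply: veq_cat; apply: veq_graft.
- by have := IH (last x xs) (Node (y0 :: ys)); apply; lia.
- by apply: IH; lia.
- by have := IH (Node (x :: xs)) y0; rewrite rdepth_cons rforests_cons; apply; lia.
Qed.

Section NthPos.
Variables (T : Type) (P : pred T).
Implicit Type w : seq T.

(* [nthpos w j] is the index in [w] of the [j]-th item (from 0) satisfying [P]. *)
Fixpoint nthpos w j : nat :=
  match w with
  | [::] => 0
  | c :: w' => if P c then (if j is j'.+1 then (nthpos w' j').+1 else 0)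
               else (nthpos w' j).+1
  end.

Lemma nthpos_lt_size w j : j < count P w -> nthpos w j < size w.
Proof.
elim: w j => [|c w IH] j //=; case: (P c) => /=; last by move/IH.
by case: j => [|j] //; rewrite add1n ltnS => /IH.
Qed.

Lemma nthpos_sat x0 w j : j < count P w -> P (nth x0 w (nthpos w j)).
Proof.
elim: w j => [|c w IH] j //=; case Pc: (P c) => /=; last by move/IH.
by case: j => [|j] //; rewrite add1n ltnS => /IH.
Qed.

Lemma count_take_nthpos w j : j < count P w -> count P (take (nthpos w j) w) = j.
Proof.
elim: w j => [|c w IH] j //=; case Pc: (P c) => /=.
  by case: j => [|j] //=; rewrite add1n ltnS Pc => /IH ->.
by rewrite add0n => /IH e; rewrite /= Pc e.
Qed.

Lemma nthpos_count_take x0 w p :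
  p < size w -> P (nth x0 w p) -> nthpos w (count P (take p w)) = p.
Proof.
elim: w p => [|c w IH] [|p] //=; first by move=> _ ->.
by rewrite ltnS => lt_pw Pp; case: (P c); rewrite /= ?add1n IH.
Qed.

Lemma ltn_nthpos w j1 j2 : j1 < j2 -> j2 < count P w -> nthpos w j1 < nthpos w j2.
Proof.
move=> lt12 lt2w; rewrite ltnNge; apply/negP => le21.
have : count P (take (nthpos w j2) w) <= count P (take (nthpos w j1) w).
  by rewrite -(take_takel w le21) -{2}(cat_take_drop (nthpos w j2) (take _ w)) count_cat leq_addr.
by rewrite !count_take_nthpos ?(ltn_trans lt12) // leqNgt lt12.
Qed.

Lemma count_take_lt x0 w p : p < size w -> P (nth x0 w p) -> count P (take p w) < count P w.
Proof.
move=> lt_pw Pp; rewrite -[in X in _ < X](cat_take_drop p w) count_cat (drop_nth x0 lt_pw) /= Pp.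
by rewrite add1n addnS ltnS leq_addr.
Qed.

End NthPos.

Definition qsh_word k l (w : seq (bool * bool)) : bool :=
  [&& all (fun c => c.1 || c.2) w, count fst w == k & count snd w == l].

Lemma size_qsh_word k l w : qsh_word k l w -> size w <= k + l.
Proof. by case/and3P => + /eqP <- /eqP <-; elim: w => [|[[] []] w IH] //= /IH; lia. Qed.

Lemma qsh_word_cons k l c w :
  c.1 || c.2 -> qsh_word k l w -> qsh_word (c.1 + k) (c.2 + l) (c :: w).
Proof. by rewrite /qsh_word /= => -> /and3P[-> /eqP-> /eqP->]; rewrite !eqxx. Qed.

Lemma mem_qsh_words k l w : (w \in qsh_words k l) = qsh_word k l w.
Proof.
apply/idP/idP.
  elim: k l w => [|k IHk] l w.
    by rewrite inE => /eqP->; rewrite /qsh_word all_nseq !count_nseq /= orbT mul1n eqxx.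
  elim: l w => [|l IHl] w.
    rewrite qsh_wordsn0 inE => /eqP->.
    by rewrite /qsh_word all_nseq !count_nseq /= mul1n mul0n !eqxx.
  rewrite qsh_wordsSS !mem_cat => /or3P[] /mapP[w' w'_in ->].
  - exact: (qsh_word_cons (c := letL) _ (IHk _ _ w'_in)).
  - exact: (qsh_word_cons (c := letB) _ (IHk _ _ w'_in)).
  - exact: (qsh_word_cons (c := letR) _ (IHl _ w'_in)).
elim: w k l => [|c w IH] k l; first by case/and3P => _ /eqP <- /eqP <-.
case/and3P => /= /andP[c_nz all_w].
case: c c_nz => [[] []] //= _.
- case: k => [|k] //; case: l => [|l] //; rewrite !add1n !eqSS => /eqP ek /eqP el.
  rewrite qsh_wordsSS !mem_cat map_f ?orbT // IH //.
  by rewrite /qsh_word all_w ek el !eqxx.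
- case: k => [|k] //; rewrite !add1n !add0n eqSS => /eqP ek /eqP el.
  have w_in : w \in qsh_words k l by rewrite IH // /qsh_word all_w ek el !eqxx.
  case: l el w_in => [|l] el w_in; last by rewrite qsh_wordsSS !mem_cat map_f.
  by rewrite qsh_wordsn0 inE in w_in; rewrite (eqP w_in) qsh_wordsn0 inE.
- case: l => [|l] //; rewrite !add1n !add0n eqSS => /eqP ek /eqP el.
  have w_in : w \in qsh_words k l by rewrite IH // /qsh_word all_w ek el !eqxx.
  case: k ek w_in => [|k] ek w_in; last by rewrite qsh_wordsSS !mem_cat map_f ?orbT.
  by rewrite qsh_words0n inE in w_in; rewrite (eqP w_in) qsh_words0n inE.
Qed.

Lemma uniq_qsh_words k l : uniq (qsh_words k l).
Proof.
elim: k l => [|k IHk] l //; elim: l => [|l IHl] //.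
rewrite qsh_wordsSS !cat_uniq !map_inj_uniq ?IHk ?IHl //=; try by move=> ? ? [].
rewrite andbT; apply/andP; split; apply/hasPn => w; rewrite ?mem_cat.
  by case/orP => /mapP[w' _ ->]; apply/negP => /mapP[? _ []].
by move=> /mapP[w' _ ->]; apply/negP => /mapP[? _ []].
Qed.

Lemma card_ord_count N (P : pred nat) : #|[pred j : 'I_N | P j]| = count P (iota 0 N).
Proof. by rewrite -val_enum_ord count_map -size_filter enumT cardE /enum_mem. Qed.

Lemma card_ord_range N a b : b <= N -> #|[pred j : 'I_N | a <= j < b]| = b - a.
Proof.
move=> le_bN; rewrite (card_ord_count N (fun j => a <= j < b)) -[in RHS](minn_idPl le_bN).
elim: N {le_bN} => [|N IH]; first by rewrite minn0.
rewrite -addn1 iotaD count_cat IH /= addn0.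
by case: (leqP a N) => ?; case: (ltnP N b) => ? /=; lia.
Qed.

Section Hits.
Variable N : nat.
Implicit Types (D : pred nat) (sg : {ffun 'I_N -> 'I_N}) (i j : 'I_N).

Definition hits D sg (p : nat) : bool := [exists j : 'I_N, D j && (val (sg j) == p)].

Definition increasing_on D sg : Prop :=
  forall i j : 'I_N, D i -> D j -> i < j -> sg i < sg j.

Lemma increasing_on_inj D sg i j :
  increasing_on D sg -> D i -> D j -> val (sg i) = val (sg j) -> i = j.
Proof.
move=> incr Di Dj e; apply: val_inj; case: (ltngtP i j) => // [lt_ij|lt_ji].
  by have := incr _ _ Di Dj lt_ij; rewrite e ltnn.
by have := incr _ _ Dj Di lt_ji; rewrite e ltnn.
Qed.

Lemma filter_hits D sg i : increasing_on D sg -> D i ->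
  [seq j : 'I_N <- enum 'I_N | D j && (val (sg j) == val (sg i))] = [:: i].
Proof.
move=> incr Di; rewrite (@eq_filter _ _ (pred1 i)) ?filter_pred1_uniq ?enum_uniq ?mem_enum //.
move=> j /=; apply/andP/eqP => [[Dj /eqP ej]|->]; last by rewrite Di eqxx.
exact: increasing_on_inj incr Dj Di ej.
Qed.

Lemma filter_not_hits D sg p : ~~ hits D sg p ->
  [seq j : 'I_N <- enum 'I_N | D j && (val (sg j) == p)] = [::].
Proof.
move=> no_hit; apply/eqP; rewrite -[_ == _]negbK -has_filter; apply: contra no_hit.
by case/hasP=> j _ hit_j; apply/existsP; exists j.
Qed.

Lemma card_hits D sg p : increasing_on D sg ->
  #|[pred j : 'I_N | D j && (val (sg j) == p)]| = hits D sg p.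
Proof.
move=> incr; rewrite cardE /enum_mem -enumT.
case: (boolP (hits D sg p)) => [/existsP[i /andP[Di /eqP <-]]|no_hit].
  by rewrite filter_hits.
by rewrite filter_not_hits.
Qed.

Lemma count_hits D sg x : increasing_on D sg ->
  count (hits D sg) (iota 0 x) = #|[pred j : 'I_N | D j && (sg j < x)]|.
Proof.
move=> incr; elim: x => [|x IH].
  by apply/esym/eq_card0 => j; rewrite !inE ltn0 andbF.
rewrite -addn1 iotaD count_cat IH /= addn0 -(card_hits x incr) addn1.
rewrite -(cardID [pred j : 'I_N | sg j < x] [pred j : 'I_N | D j && (sg j < x.+1)]).
by congr (_ + _); apply: eq_card => j; rewrite !inE ltnS; case: (D j) => //=; case: ltngtP.
Qed.

Lemma count_hits_rank D sg i : increasing_on D sg -> D i ->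
  count (hits D sg) (iota 0 (sg i)) = #|[pred j : 'I_N | D j && (j < i)]|.
Proof.
move=> incr Di; rewrite count_hits //; apply: eq_card => j; rewrite !inE.
case Dj: (D j) => //=; case: (ltngtP j i) => [lt_ji|lt_ij|/val_inj->]; last exact: ltnn.
  exact: incr.
by apply/negbTE; rewrite -leqNgt ltnW // incr.
Qed.

End Hits.

Section QuasiShuffleWords.
Variables k l : nat.
Local Notation N := (k + l).
Implicit Types (sg : {ffun 'I_N -> 'I_N}) (i : 'I_N) (w : seq (bool * bool)).

Definition blockL : pred nat := fun j => j < k.
Definition blockR : pred nat := fun j => k <= j.
Arguments blockL _ /.
Arguments blockR _ /.

Lemma qsh_increasingL sg : is_qsh sg -> increasing_on blockL sg.
Proof.
case/and3P => /forallP incr _ _ i j _ lt_jk lt_ij.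
by have /forallP/(_ j)/implyP := incr i; apply; rewrite lt_ij.
Qed.

Lemma qsh_increasingR sg : is_qsh sg -> increasing_on blockR sg.
Proof.
case/and3P => _ /forallP incr _ i j le_ki _ lt_ij.
by have /forallP/(_ j)/implyP := incr i; apply; rewrite lt_ij andbT.
Qed.

Lemma qsh_n_le sg : qsh_n sg <= N.
Proof. by apply: leq_trans (max_card _) _; rewrite card_ord. Qed.

Lemma qsh_lt_n sg i : is_qsh sg -> sg i < qsh_n sg.
Proof.
case/and3P => _ _ /eqP img_sg.
have : sg i \in qsh_img sg by apply: imset_f.
by rewrite img_sg inE.
Qed.

Lemma qsh_surj sg p : is_qsh sg -> p < qsh_n sg -> exists i, val (sg i) = p.
Proof.
case/and3P => _ _ /eqP img_sg lt_pn.
have lt_pN : p < N by apply: leq_trans lt_pn (qsh_n_le sg).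
have : Ordinal lt_pN \in qsh_img sg by rewrite img_sg inE.
by case/imsetP => i _ e; exists i; rewrite -e.
Qed.

Lemma qsh_rankL sg i : is_qsh sg -> i < k -> count (hits blockL sg) (iota 0 (sg i)) = i.
Proof.
move=> q lt_ik; rewrite count_hits_rank //; last exact: qsh_increasingL.
rewrite -[RHS]subn0 -(card_ord_range 0 (ltnW (ltn_ord i))); apply: eq_card => j.
by rewrite !inE /blockL andbC; case: ltnP => // lt_ji; rewrite (ltn_trans lt_ji lt_ik).
Qed.

Lemma qsh_rankR sg i : is_qsh sg -> k <= i -> count (hits blockR sg) (iota 0 (sg i)) = i - k.
Proof.
move=> q le_ki; rewrite count_hits_rank //; last exact: qsh_increasingR.
by rewrite -(card_ord_range k (ltnW (ltn_ord i))).
Qed.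

Definition word_of_qsh sg : seq (bool * bool) :=
  [seq (hits blockL sg p, hits blockR sg p) | p <- iota 0 (qsh_n sg)].

Lemma take_word_of_qsh sg p : p <= qsh_n sg ->
  take p (word_of_qsh sg) = [seq (hits blockL sg q, hits blockR sg q) | q <- iota 0 p].
Proof. by move=> le_pn; rewrite -map_take take_iota (minn_idPl le_pn). Qed.

Lemma qsh_word_of_qsh sg : is_qsh sg -> qsh_word k l (word_of_qsh sg).
Proof.
move=> q; apply/and3P; split.
- apply/allP => c /mapP[p]; rewrite mem_iota add0n => /(qsh_surj q)[i <-] -> /=.
  by apply/orP; case: (ltnP i k) => [lt_ik|le_ki]; [left|right];
    apply/existsP; exists i; rewrite eqxx andbT.
- rewrite count_map count_hits; last exact: qsh_increasingL.
  rewrite -[k in _ == k]subn0 -(card_ord_range 0 (leq_addr l k)); apply/eqP/eq_card => j.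
  by rewrite !inE qsh_lt_n // andbT.
- rewrite count_map count_hits; last exact: qsh_increasingR.
  rewrite -[l in _ == l](addKn k) -(card_ord_range k (leqnn N)); apply/eqP/eq_card => j.
  by rewrite !inE qsh_lt_n // ltn_ord !andbT.
Qed.

Lemma qsh_left_hits sg Ft p : is_qsh sg -> qsh_left Ft sg p =
  if hits blockL sg p then nth [::] Ft (count (hits blockL sg) (iota 0 p)) else [::].
Proof.
move=> q; case: ifP => [/existsP[i /andP[Di /eqP <-]]|/negbT no_hit].
  rewrite /qsh_left (@filter_hits _ blockL) /= ?cats0 ?qsh_rankL //; exact: qsh_increasingL.
by rewrite /qsh_left (@filter_not_hits _ blockL).
Qed.

Lemma qsh_right_hits sg Fs p : is_qsh sg -> qsh_right Fs sg p =
  if hits blockR sg p then nth [::] Fs (count (hits blockR sg) (iota 0 p)) else [::].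
Proof.
move=> q; case: ifP => [/existsP[i /andP[Di /eqP <-]]|/negbT no_hit].
  rewrite /qsh_right (@filter_hits _ blockR) /= ?cats0 ?qsh_rankR //; exact: qsh_increasingR.
by rewrite /qsh_right (@filter_not_hits _ blockR).
Qed.

Lemma ladder_word_tree sg Ft Fs m p : is_qsh sg ->
  ladder Ft Fs sg m p =
  word_tree Ft Fs (count (hits blockL sg) (iota 0 p)) (count (hits blockR sg) (iota 0 p))
    [seq (hits blockL sg q, hits blockR sg q) | q <- iota p m].
Proof.
move=> q; elim: m p => [|m IH] p //=.
rewrite qsh_left_hits // qsh_right_hits // IH -addn1 iotaD !count_cat /= !addn0.
by case: (hits blockL sg p).
Qed.

Lemma qsh_tree_word sg Ft Fs :
  is_qsh sg -> qsh_tree Ft Fs sg = word_tree Ft Fs 0 0 (word_of_qsh sg).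
Proof. exact: ladder_word_tree. Qed.

Definition qsh_of_word w : {ffun 'I_N -> 'I_N} :=
  [ffun i : 'I_N => insubd i (if i < k then nthpos fst w i else nthpos snd w (i - k))].

Lemma val_qsh_of_word w i : qsh_word k l w ->
  val (qsh_of_word w i) = if i < k then nthpos fst w i else nthpos snd w (i - k).
Proof.
move=> w_qsh; have le_wN := size_qsh_word w_qsh; case/and3P: w_qsh => _ /eqP cL /eqP cR.
rewrite ffunE val_insubd; case: ifP => //; case: ifP => lt_ik.
  by rewrite (leq_trans (nthpos_lt_size _) le_wN) // cL.
by rewrite (leq_trans (nthpos_lt_size _) le_wN) // cR; move: (ltn_ord i) lt_ik; lia.
Qed.

Lemma hits_qsh_of_word w p : qsh_word k l w -> p < size w ->
  (hits blockL (qsh_of_word w) p, hits blockR (qsh_of_word w) p) = nth (false, false) w p.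
Proof.
move=> w_qsh lt_pw; have /and3P[_ /eqP cL /eqP cR] := w_qsh.
have -> : hits blockL (qsh_of_word w) p = (nth (false, false) w p).1.
  apply/existsP/idP => [[i /andP[/= lt_ik /eqP <-]]|nth_p].
    by rewrite val_qsh_of_word // lt_ik; apply: nthpos_sat; rewrite cL.
  have lt_ck : count fst (take p w) < k by rewrite -cL (count_take_lt lt_pw nth_p).
  exists (Ordinal (leq_trans lt_ck (leq_addr l k))); rewrite /= lt_ck.
  by rewrite val_qsh_of_word //= lt_ck (nthpos_count_take lt_pw nth_p).
have -> : hits blockR (qsh_of_word w) p = (nth (false, false) w p).2.
  apply/existsP/idP => [[i /andP[/= le_ki /eqP <-]]|nth_p].
    rewrite val_qsh_of_word // ltnNge le_ki /=; apply: nthpos_sat.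
    by rewrite cR; move: (ltn_ord i) le_ki; lia.
  have lt_cl : count snd (take p w) < l by rewrite -cR (count_take_lt lt_pw nth_p).
  have lt_cN : k + count snd (take p w) < N by rewrite ltn_add2l.
  exists (Ordinal lt_cN); rewrite /= leq_addr val_qsh_of_word //= ltnNge leq_addr /= addKn.
  by rewrite (nthpos_count_take lt_pw nth_p).
by case: nth.
Qed.

Lemma qsh_img_of_word w :
  qsh_word k l w -> qsh_img (qsh_of_word w) = [set p : 'I_N | p < size w].
Proof.
move=> w_qsh; have /and3P[all_w /eqP cL /eqP cR] := w_qsh.
apply/setP => p; rewrite inE; apply/imsetP/idP => [[i _ ->]|lt_pw].
  rewrite val_qsh_of_word //; case: ifP => lt_ik; apply: nthpos_lt_size; first by rewrite cL.
  by rewrite cR; move: (ltn_ord i) lt_ik; lia.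
have := allP all_w _ (mem_nth (false, false) lt_pw).
rewrite -(hits_qsh_of_word w_qsh lt_pw) => /orP[] /existsP[i /andP[_ /eqP e]];
  by exists i => //; apply: val_inj.
Qed.

Lemma qsh_n_of_word w : qsh_word k l w -> qsh_n (qsh_of_word w) = size w.
Proof.
move=> w_qsh; rewrite /qsh_n qsh_img_of_word // -[RHS]subn0.
by rewrite -(card_ord_range 0 (size_qsh_word w_qsh)); apply: eq_card => p; rewrite !inE.
Qed.

Lemma is_qsh_of_word w : qsh_word k l w -> is_qsh (qsh_of_word w).
Proof.
move=> w_qsh; have /and3P[_ /eqP cL /eqP cR] := w_qsh.
apply/and3P; split; [apply/forallP => i; apply/forallP => j; apply/implyP..|].
- case/andP => lt_ij lt_jk; rewrite !val_qsh_of_word // lt_jk (ltn_trans lt_ij lt_jk).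
  by apply: ltn_nthpos; rewrite // cL.
- case/andP => le_ki lt_ij; rewrite !val_qsh_of_word // (ltnNge i k) (ltnNge j k) le_ki.
  rewrite (leq_trans le_ki (ltnW lt_ij)) /=; apply: ltn_nthpos; first lia.
  by rewrite cR; move: (ltn_ord j); lia.
- by rewrite qsh_n_of_word // qsh_img_of_word.
Qed.

Lemma qsh_of_wordK w : qsh_word k l w -> word_of_qsh (qsh_of_word w) = w.
Proof.
move=> w_qsh; rewrite /word_of_qsh qsh_n_of_word // -[RHS](mkseq_nth (false, false)).
by apply/eq_in_map => p; rewrite mem_iota add0n => lt_pw; apply: hits_qsh_of_word.
Qed.

Lemma word_of_qshK sg : is_qsh sg -> qsh_of_word (word_of_qsh sg) = sg.
Proof.
move=> q; pose w := word_of_qsh sg.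
have count_take (f : bool * bool -> bool) i :
    count f (take (sg i) w) =
    count (fun p => f (hits blockL sg p, hits blockR sg p)) (iota 0 (sg i)).
  by rewrite take_word_of_qsh ?count_map // ltnW ?qsh_lt_n.
have lt_sg_w i : sg i < size w by rewrite size_map size_iota qsh_lt_n.
have nth_sg i : nth (false, false) w (sg i) = (hits blockL sg (sg i), hits blockR sg (sg i)).
  by rewrite (nth_map 0) ?nth_iota ?size_iota ?qsh_lt_n.
have hit_sg (D : pred nat) i : D i -> hits D sg (sg i).
  by move=> Di; apply/existsP; exists i; rewrite Di eqxx.
apply/ffunP => i; apply: val_inj; rewrite val_qsh_of_word ?qsh_word_of_qsh //.
case: ifP => [lt_ik|/negbT]; last rewrite -leqNgt => le_ki.
  rewrite -{1}(qsh_rankL q lt_ik) -(count_take fst).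
  rewrite (nthpos_count_take (x0 := (false, false))) //.
  by rewrite nth_sg; apply: hit_sg.
rewrite -(qsh_rankR q le_ki) -(count_take snd).
rewrite (nthpos_count_take (x0 := (false, false))) //.
by rewrite nth_sg; apply: hit_sg.
Qed.

Lemma perm_qsh_words :
  perm_eq [seq word_of_qsh sg | sg <- enum [pred sg | is_qsh sg]] (qsh_words k l).
Proof.
apply: uniq_perm.
- rewrite map_inj_in_uniq ?enum_uniq // => sg1 sg2; rewrite !mem_enum => q1 q2 e.
  by rewrite -(word_of_qshK q1) e word_of_qshK.
- exact: uniq_qsh_words.
move=> w; rewrite mem_qsh_words; apply/mapP/idP => [[sg]|w_qsh].
  by rewrite mem_enum => q ->; apply: qsh_word_of_qsh.
by exists (qsh_of_word w); rewrite ?mem_enum ?inE ?is_qsh_of_word ?qsh_of_wordK.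
Qed.

End QuasiShuffleWords.

Lemma word_sum_qsh_sum (K : fieldType) k l Ft Fs :
  veq (word_sum K (qsh_words k l) Ft Fs) (qsh_sum k l K Ft Fs).
Proof.
have -> : qsh_sum k l K Ft Fs =
    word_sum K [seq @word_of_qsh k l sg | sg <- enum [pred sg | is_qsh sg]] Ft Fs.
  rewrite /qsh_sum /word_sum -map_comp; apply/eq_in_map => sg; rewrite mem_enum => q /=.
  by rewrite qsh_tree_word.
by apply/veq_perm/perm_map; rewrite perm_sym perm_qsh_words.
Qed.

Theorem mainTheorem8 (K : fieldType) (t s : tree) :
  wf t -> wf s -> t != leaf -> s != leaf ->
  veq (star K t s) (qsh_sum (rdepth t) (ldepth s) K (rforests t) (lforests s)).
Proof.
move=> _ _ _ _; apply: veq_trans (star_qsh_words K t s) _.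
exact: word_sum_qsh_sum.
Qed.
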